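(* Let $\beta,k\in\mathbb{R}$, $r>0$, and let $\gamma\in C^2([0,r])$ satisfy $-\gamma''-\beta|\gamma'|=k$ and $\gamma'>0$ in $(0,r)$. Let $\varepsilon>0$ and suppose that $r\ge2\varepsilon$ or $\gamma'(r)=0$. Then, with $r_1:=\min\{\varepsilon,r\}$ and $r_2:=\min\{2\varepsilon,r\}$, $$a^+_\varepsilon(\beta)\big(\gamma(r_1)-\gamma(0)\big)-a^-_\varepsilon(\beta)\big(\gamma(r_2)-\gamma(r_1)\big)\le\varepsilon k.$$
   Context: Coefficients: for $\beta\neq0$, $a^+_\varepsilon(\beta):=\frac{\beta}{e^{\varepsilon\beta}-1}$ and $a^-_\varepsilon(\beta):=\frac{\beta}{1-e^{-\varepsilon\beta}}$; for $\beta=0$, $a^+_\varepsilon(0):=a^-_\varepsilon(0):=1/\varepsilon$. *)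

From Stdlib Require Import Reals.
Open Scope R_scope.

Definition a_plus (eps beta : R) : R :=
  if Req_EM_T beta 0 then 1 / eps else beta / (exp (eps * beta) - 1).
Definition a_minus (eps beta : R) : R :=
  if Req_EM_T beta 0 then 1 / eps else beta / (1 - exp (- (eps * beta))).

Definition deriv_on (a b : R) (f f' : R -> R) : Prop :=
  forall x, a <= x <= b ->
  forall e, 0 < e -> exists d, 0 < d /\
    forall y, a <= y <= b -> Rabs (y - x) < d ->
      Rabs (f y - f x - f' x * (y - x)) <= e * Rabs (y - x).

Definition cont_on (a b : R) (f : R -> R) : Prop :=
  forall x, a <= x <= b ->
  forall e, 0 < e -> exists d, 0 < d /\
    forall y, a <= y <= b -> Rabs (y - x) < d -> Rabs (f y - f x) < e.

Definition C2_on (a b : R) (g g1 g2 : R -> R) : Prop :=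
  deriv_on a b g g1 /\ deriv_on a b g1 g2 /\ cont_on a b g2.

(* Since [gamma' > 0], the equation is linear: [gamma'' = - k - beta gamma'], so [gamma - gamma 0]
   is an explicit profile [P] (quadratic for [beta = 0], exponential otherwise).  The weights
   [a_plus] and [a_minus] are exactly those for which
   [a_plus * P eps - a_minus * (P (2 eps) - P eps) = eps k] for every such profile, which settles
   [2 eps <= r].  If [r < 2 eps] then [gamma' (r) = 0] pins down the profile and forces [k >= 0];
   the profile then decreases beyond [r], and the remaining case [r < eps] reduces to
   [exp s (1 - s) <= 1]. *)

From Stdlib Require Import Reals Lra Psatz.
From Coquelicot Require Import Coquelicot.
Open Scope R_scope.

(* Composing with [clamp a b] turns data on [a, b] into functions on [R], to which the
   mean value theorem applies. *)
Definition clamp (a b x : R) : R := Rmax a (Rmin x b).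

Lemma clamp_id a b x : a <= x <= b -> clamp a b x = x.
Proof. intros. unfold clamp, Rmax, Rmin; repeat destruct Rle_dec; lra. Qed.

Lemma clamp_in a b x : a <= b -> a <= clamp a b x <= b.
Proof. intros. unfold clamp, Rmax, Rmin; repeat destruct Rle_dec; lra. Qed.

Lemma clamp_lipschitz a b x y : a <= b -> Rabs (clamp a b x - clamp a b y) <= Rabs (x - y).
Proof.
  intros. unfold clamp, Rmax, Rmin, Rabs; repeat destruct Rle_dec; repeat destruct Rcase_abs; lra.
Qed.

Lemma deriv_on_cont_on a b f f' : deriv_on a b f f' -> cont_on a b f.
Proof.
  intros Hd x Hx e He.
  destruct (Hd x Hx 1 Rlt_0_1) as [d [Hd0 Hf]].
  set (m := Rabs (f' x) + 2).
  assert (Hm : 0 < m) by (pose proof (Rabs_pos (f' x)); unfold m; lra).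
  exists (Rmin d (e / m)). split; [apply Rmin_pos; [lra | apply Rdiv_lt_0_compat; lra] |].
  intros y Hy Hyx.
  pose proof (Rmin_l d (e / m)). pose proof (Rmin_r d (e / m)).
  specialize (Hf y Hy ltac:(lra)).
  assert (Hem : e / m * m = e) by (field; lra).
  pose proof (Rabs_triang (f y - f x - f' x * (y - x)) (f' x * (y - x))) as T.
  replace (f y - f x - f' x * (y - x) + f' x * (y - x)) with (f y - f x) in T by ring.
  rewrite Rabs_mult in T. pose proof (Rabs_pos (y - x)). pose proof (Rabs_pos (f' x)).
  unfold m in *. nra.
Qed.

Lemma continuity_pt_clamp a b f x : a <= b -> cont_on a b f -> a <= x <= b ->
  continuity_pt (fun y => f (clamp a b y)) x.
Proof.
  intros Hab Hf Hx e He. unfold dist; simpl; unfold R_dist.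
  destruct (Hf x Hx e He) as [d [Hd H]]. exists d; split; auto.
  intros y [_ Hy]. rewrite (clamp_id a b x Hx). apply H; [apply clamp_in; auto |].
  pose proof (clamp_lipschitz a b y x Hab) as L. rewrite (clamp_id a b x Hx) in L. lra.
Qed.

Lemma is_derive_clamp a b f f' x : deriv_on a b f f' -> a < x < b ->
  is_derive (fun y => f (clamp a b y)) x (f' x).
Proof.
  intros Hd Hx. apply is_derive_Reals. intros e He.
  destruct (Hd x ltac:(lra) (e / 2) ltac:(lra)) as [d [Hd0 Hf]].
  assert (Hm : 0 < Rmin d (Rmin (x - a) (b - x))) by (repeat apply Rmin_pos; lra).
  exists (mkposreal _ Hm). intros h Hh0 Hh. simpl in Hh.
  pose proof (Rmin_l d (Rmin (x - a) (b - x))). pose proof (Rmin_r d (Rmin (x - a) (b - x))).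
  pose proof (Rmin_l (x - a) (b - x)). pose proof (Rmin_r (x - a) (b - x)).
  destruct (Rabs_def2 _ _ Hh) as [Hh1 Hh2].
  rewrite (clamp_id a b (x + h)), (clamp_id a b x) by lra.
  specialize (Hf (x + h) ltac:(lra)). replace (x + h - x) with h in Hf by ring.
  specialize (Hf ltac:(lra)).
  replace ((f (x + h) - f x) / h - f' x) with ((f (x + h) - f x - f' x * h) / h) by (field; auto).
  unfold Rdiv. rewrite Rabs_mult, Rabs_inv.
  pose proof (Rabs_pos_lt h Hh0).
  apply Rle_lt_trans with (e / 2); [| lra].
  apply Rmult_le_reg_r with (Rabs h); auto.
  rewrite Rmult_assoc, Rinv_l by lra. lra.
Qed.

Lemma continuity_pt_ex_derive (f : R -> R) x : ex_derive f x -> continuity_pt f x.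
Proof. intros [l H]. apply derivable_continuous_pt. exists l. now apply is_derive_Reals. Qed.

Lemma null_derivative_on a b F :
  (forall x, a < x < b -> is_derive F x 0) ->
  (forall x, a <= x <= b -> continuity_pt F x) ->
  forall x, a <= x <= b -> F x = F a.
Proof.
  intros Hd Hc x Hx.
  destruct (MVT_gen F a x (fun _ => 0)) as [c [_ Hc0]].
  - intros y Hy. rewrite Rmin_left, Rmax_right in Hy by lra. apply Hd. lra.
  - intros y Hy. rewrite Rmin_left, Rmax_right in Hy by lra. apply Hc. lra.
  - lra.
Qed.

Lemma deriv_on_antiderivative a b (f f' h h' : R -> R) : a <= b -> deriv_on a b f f' ->
  (forall x, is_derive h x (h' x)) -> (forall x, a < x < b -> f' x = h' x) ->
  forall x, a <= x <= b -> f x = f a + (h x - h a).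
Proof.
  intros Hab Hf Hh Heq x Hx.
  assert (E : f (clamp a b x) - h x = f (clamp a b a) - h a).
  { refine (null_derivative_on a b (fun y => f (clamp a b y) - h y) _ _ x Hx).
    - intros y Hy. replace 0 with (f' y - h' y) by (rewrite Heq; [ring | exact Hy]).
      apply (is_derive_minus (fun y => f (clamp a b y)) h);
        [exact (is_derive_clamp a b f f' y Hf Hy) | apply Hh].
    - intros y Hy.
      apply (continuity_pt_minus (fun y => f (clamp a b y)) h).
      + exact (continuity_pt_clamp a b f y Hab (deriv_on_cont_on a b f f' Hf) Hy).
      + apply continuity_pt_ex_derive. exists (h' y). apply Hh. }
  rewrite !clamp_id in E by lra. lra.
Qed.

Lemma is_derive_integrating_factor (G : R -> R) x l beta c : is_derive G x l ->
  is_derive (fun y => (G y - c) * exp (beta * y)) x ((l + beta * (G x - c)) * exp (beta * x)).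
Proof.
  intros D. auto_derive.
  - exists l. exact D.
  - replace (Derive (fun x0 => G x0) x) with l
      by (symmetry; exact (is_derive_unique G x l D)).
    ring.
Qed.

Lemma deriv_on_linear_ode a b f f' beta c : a <= b -> deriv_on a b f f' ->
  (forall x, a < x < b -> f' x = - beta * (f x - c)) ->
  forall x, a <= x <= b -> f x = c + (f a - c) * exp (- beta * (x - a)).
Proof.
  intros Hab Hf Hode x Hx.
  assert (E : (f (clamp a b x) - c) * exp (beta * x) = (f (clamp a b a) - c) * exp (beta * a)).
  { refine (null_derivative_on a b (fun y => (f (clamp a b y) - c) * exp (beta * y)) _ _ x Hx).
    - intros y Hy.
      replace 0 with ((f' y + beta * (f (clamp a b y) - c)) * exp (beta * y))
        by (rewrite clamp_id, Hode by lra; ring).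
      exact (is_derive_integrating_factor _ y _ beta c (is_derive_clamp a b f f' y Hf Hy)).
    - intros y Hy.
      apply (continuity_pt_mult (fun y => f (clamp a b y) - c) (fun y => exp (beta * y))).
      + apply (continuity_pt_minus (fun y => f (clamp a b y)) (fun _ => c)).
        * exact (continuity_pt_clamp a b f y Hab (deriv_on_cont_on a b f f' Hf) Hy).
        * apply continuity_pt_const. intros ? ?. reflexivity.
      + apply continuity_pt_ex_derive. auto_derive. auto. }
  rewrite !clamp_id in E by lra.
  replace (- beta * (x - a)) with (beta * a + - (beta * x)) by ring.
  rewrite exp_plus, exp_Ropp, <- Rmult_assoc, <- E.
  field. apply Rgt_not_eq, exp_pos.
Qed.

Lemma mul_exp_sub1_pos x : x <> 0 -> 0 < x * (exp x - 1).
Proof.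
  intros Hx. rewrite <- exp_0.
  destruct (Rlt_or_le 0 x) as [H | H].
  - pose proof (exp_increasing 0 x H). nra.
  - pose proof (exp_increasing x 0 ltac:(lra)). nra.
Qed.

Lemma exp_mul_exp_opp x : exp x * exp (- x) = 1.
Proof. rewrite <- exp_plus, Rplus_opp_r. apply exp_0. Qed.

Lemma exp_le_1 x : x <= 0 -> exp x <= 1.
Proof.
  intros Hx.
  pose proof (exp_ineq1_le (- x)). pose proof (exp_mul_exp_opp x). pose proof (exp_pos x).
  nra.
Qed.

(* The map [s |-> exp s - 1 - s] grows with [|s|]; and [1 - y <= exp (- y)]. *)
Lemma exp_sub_lin_le x y : 0 <= x <= y \/ y <= x <= 0 -> exp x - 1 - x <= y * (exp y - 1).
Proof.
  intros Hxy.
  assert (Hmono : exp x - 1 - x <= exp y - 1 - y).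
  { replace (exp y) with (exp x * exp (y - x)) by (rewrite <- exp_plus; f_equal; ring).
    pose proof (exp_ineq1_le (y - x)). pose proof (exp_ineq1_le x). pose proof (exp_pos x).
    destruct Hxy.
    - nra.
    - pose proof (exp_le_1 x ltac:(lra)). pose proof (exp_le_1 (y - x) ltac:(lra)). nra. }
  pose proof (exp_ineq1_le (- y)). pose proof (exp_mul_exp_opp y). pose proof (exp_pos y).
  nra.
Qed.

Lemma a_plus_nonzero eps beta : beta <> 0 -> a_plus eps beta = beta / (exp (eps * beta) - 1).
Proof. intros Hb. unfold a_plus. destruct Req_EM_T; [contradiction | reflexivity]. Qed.

Lemma a_minus_nonzero eps beta : beta <> 0 -> a_minus eps beta = beta / (1 - exp (- (eps * beta))).
Proof. intros Hb. unfold a_minus. destruct Req_EM_T; [contradiction | reflexivity]. Qed.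

Lemma a_plus_zero eps : a_plus eps 0 = 1 / eps.
Proof. unfold a_plus. destruct Req_EM_T; [reflexivity | lra]. Qed.

Lemma a_minus_zero eps : a_minus eps 0 = 1 / eps.
Proof. unfold a_minus. destruct Req_EM_T; [reflexivity | lra]. Qed.

Lemma a_minus_pos eps beta : 0 < eps -> 0 < a_minus eps beta.
Proof.
  intros He. destruct (Req_EM_T beta 0) as [-> | Hb].
  - rewrite a_minus_zero. apply Rdiv_lt_0_compat; lra.
  - rewrite a_minus_nonzero by exact Hb.
    assert (Hs : 0 < (- (eps * beta)) * (exp (- (eps * beta)) - 1))
      by (apply mul_exp_sub1_pos; nra).
    assert (Hd : 0 < beta * (1 - exp (- (eps * beta)))) by nra.
    replace (beta / (1 - exp (- (eps * beta))))
      with (beta * beta / (beta * (1 - exp (- (eps * beta))))) by (field; nra).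
    apply Rdiv_lt_0_compat; nra.
Qed.

Definition quad_profile (k C x : R) : R := C * x - k / 2 * x ^ 2.

Definition exp_profile (beta k A x : R) : R := A / beta * (1 - exp (- beta * x)) - k / beta * x.

Lemma quad_profile_balance k C eps : 0 < eps ->
  a_plus eps 0 * quad_profile k C eps
  - a_minus eps 0 * (quad_profile k C (2 * eps) - quad_profile k C eps) = eps * k.
Proof. intros He. rewrite a_plus_zero, a_minus_zero. unfold quad_profile. field. lra. Qed.

Lemma quad_profile_drop k r y : 0 <= k -> r <= y ->
  quad_profile k (k * r) y <= quad_profile k (k * r) r.
Proof.
  intros Hk Hy. unfold quad_profile.
  pose proof (Rmult_le_pos k ((y - r) * (y - r)) Hk ltac:(nra)). nra.
Qed.

Lemma quad_profile_short k r eps : 0 <= k -> 0 < eps -> 0 <= r <= eps ->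
  a_plus eps 0 * quad_profile k (k * r) r <= eps * k.
Proof.
  intros Hk He Hr. rewrite a_plus_zero. unfold quad_profile.
  replace (eps * k) with (1 / eps * (eps * eps * k)) by (field; lra).
  apply Rmult_le_compat_l; [apply Rlt_le, Rdiv_lt_0_compat; lra |].
  pose proof (Rmult_le_pos k (eps * eps - r * r) Hk ltac:(nra)). nra.
Qed.

Lemma exp_profile_balance beta k A eps : beta <> 0 -> 0 < eps ->
  a_plus eps beta * exp_profile beta k A eps
  - a_minus eps beta * (exp_profile beta k A (2 * eps) - exp_profile beta k A eps) = eps * k.
Proof.
  intros Hb He. rewrite a_plus_nonzero, a_minus_nonzero by exact Hb. unfold exp_profile.
  set (u := exp (- beta * eps)).
  assert (Hu : 0 < u) by apply exp_pos.
  assert (Hu1 : 1 - u <> 0).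
  { pose proof (mul_exp_sub1_pos (- beta * eps) ltac:(nra)) as Hs. fold u in Hs. nra. }
  replace (exp (eps * beta)) with (/ u) by (unfold u; rewrite <- exp_Ropp; f_equal; ring).
  replace (/ u - 1) with ((1 - u) / u) by (field; lra).
  replace (exp (- (eps * beta))) with u by (unfold u; f_equal; ring).
  replace (exp (- beta * (2 * eps))) with (u * u)
    by (unfold u; rewrite <- exp_plus; f_equal; ring).
  field. repeat split; lra.
Qed.

Lemma exp_profile_drop beta k r y : beta <> 0 -> 0 <= k -> r <= y ->
  exp_profile beta k (k / beta * exp (beta * r)) y
  <= exp_profile beta k (k / beta * exp (beta * r)) r.
Proof.
  intros Hb Hk Hy. unfold exp_profile.
  set (s := beta * (y - r)).
  replace (exp (- beta * y)) with (exp (- beta * r) * exp (- s))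
    by (unfold s; rewrite <- exp_plus; f_equal; ring).
  replace (exp (- beta * r)) with (/ exp (beta * r))
    by (rewrite <- exp_Ropp; f_equal; ring).
  assert (HE : exp (beta * r) <> 0) by apply Rgt_not_eq, exp_pos.
  assert (Hs : 0 <= exp (- s) - 1 + s) by (pose proof (exp_ineq1_le (- s)); lra).
  assert (Hc : 0 <= k / (beta * beta))
    by (apply Rmult_le_pos; [lra | apply Rlt_le, Rinv_0_lt_compat; nra]).
  enough (k / beta * exp (beta * r) / beta * (1 - / exp (beta * r))
          - k / beta * r
          - (k / beta * exp (beta * r) / beta * (1 - / exp (beta * r) * exp (- s)) - k / beta * y)
          = k / (beta * beta) * (exp (- s) - 1 + s)) by nra.
  unfold s. field. split; assumption.
Qed.

Lemma exp_profile_short beta k r eps : beta <> 0 -> 0 <= k -> 0 < eps -> 0 <= r <= eps ->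
  a_plus eps beta * exp_profile beta k (k / beta * exp (beta * r)) r <= eps * k.
Proof.
  intros Hb Hk He Hr. rewrite a_plus_nonzero by exact Hb. unfold exp_profile.
  set (D := beta * (exp (eps * beta) - 1)).
  assert (HD : 0 < D).
  { pose proof (mul_exp_sub1_pos (eps * beta) ltac:(nra)). unfold D. nra. }
  assert (Hlin : exp (beta * r) - 1 - beta * r <= beta * eps * (exp (eps * beta) - 1)).
  { replace (eps * beta) with (beta * eps) by ring. apply exp_sub_lin_le. nra. }
  replace (exp (- beta * r)) with (/ exp (beta * r)) by (rewrite <- exp_Ropp; f_equal; ring).
  assert (HE : exp (beta * r) <> 0) by apply Rgt_not_eq, exp_pos.
  assert (exp (eps * beta) - 1 <> 0) by (unfold D in HD; nra).
  replace (beta / (exp (eps * beta) - 1) *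
           (k / beta * exp (beta * r) / beta * (1 - / exp (beta * r)) - k / beta * r))
    with (k * (exp (beta * r) - 1 - beta * r) / D) by (unfold D; field; auto).
  replace (eps * k) with (k * (eps * D) / D) by (field; lra).
  apply Rmult_le_compat_r; [apply Rlt_le, Rinv_0_lt_compat; lra |].
  apply Rmult_le_compat_l; [lra | unfold D; nra].
Qed.

(* [P] extends [gamma - gamma 0] beyond [r]: it is evaluated at [2 * eps] even when
   [r < 2 * eps]. *)
Lemma bound_of_profile beta k r eps (gamma P : R -> R) : 0 <= r -> 0 < eps ->
  (forall x, 0 <= x <= r -> gamma x = gamma 0 + P x) ->
  a_plus eps beta * P eps - a_minus eps beta * (P (2 * eps) - P eps) = eps * k ->
  (r < 2 * eps -> P (2 * eps) <= P r /\ (r < eps -> a_plus eps beta * P r <= eps * k)) ->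
  a_plus eps beta * (gamma (Rmin eps r) - gamma 0)
    - a_minus eps beta * (gamma (Rmin (2 * eps) r) - gamma (Rmin eps r)) <= eps * k.
Proof.
  intros Hr He Hgamma Hbal Hshort.
  pose proof (a_minus_pos eps beta He) as Ham.
  destruct (Rle_lt_dec (2 * eps) r) as [Hlong | Hlt].
  - rewrite !Rmin_left, (Hgamma eps), (Hgamma (2 * eps)) by lra. lra.
  - destruct (Hshort Hlt) as [Hdrop Hsmall].
    destruct (Rle_lt_dec eps r) as [Hmid | Hlt'].
    + rewrite Rmin_left, Rmin_right, (Hgamma eps), (Hgamma r) by lra.
      pose proof (Rmult_le_compat_l _ _ _ (Rlt_le _ _ Ham) Hdrop). lra.
    + rewrite !Rmin_right, (Hgamma r) by lra.
      replace (gamma 0 + P r - (gamma 0 + P r)) with 0 by ring. lra.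
Qed.

Section Solution.

Variables (beta k r : R) (gamma g1 g2 : R -> R).
Hypothesis Hr : 0 < r.
Hypothesis Hgamma : deriv_on 0 r gamma g1.
Hypothesis Hg1 : deriv_on 0 r g1 g2.
Hypothesis Hode : forall x, 0 < x < r -> g2 x = - k - beta * g1 x.
Hypothesis Hpos : forall x, 0 < x < r -> 0 < g1 x.

Lemma g1_affine : beta = 0 -> forall x, 0 <= x <= r -> g1 x = g1 0 - k * x.
Proof.
  intros Hb x Hx.
  assert (D : forall y, is_derive (fun y => - k * y) y (- k)) by (intros; auto_derive; auto; ring).
  rewrite (deriv_on_antiderivative 0 r g1 g2 _ _ (Rlt_le _ _ Hr) Hg1 D) by
    (try exact Hx; intros y Hy; rewrite Hode, Hb by exact Hy; ring).
  ring.
Qed.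

Lemma gamma_quad_profile : beta = 0 ->
  forall x, 0 <= x <= r -> gamma x = gamma 0 + quad_profile k (g1 0) x.
Proof.
  intros Hb x Hx.
  assert (D : forall y, is_derive (quad_profile k (g1 0)) y (g1 0 - k * y))
    by (intros; unfold quad_profile; auto_derive; auto; field).
  rewrite (deriv_on_antiderivative 0 r gamma g1 _ _ (Rlt_le _ _ Hr) Hgamma D) by
    (try exact Hx; intros y Hy; apply g1_affine; auto; lra).
  unfold quad_profile. ring.
Qed.

Lemma quad_endpoint : beta = 0 -> g1 r = 0 -> g1 0 = k * r /\ 0 <= k.
Proof.
  intros Hb Hg1r.
  rewrite g1_affine in Hg1r by (auto; lra).
  pose proof (Hpos (r / 2) ltac:(lra)) as Hmid. rewrite g1_affine in Hmid by (auto; lra).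
  split; nra.
Qed.

Lemma g1_exp : beta <> 0 ->
  forall x, 0 <= x <= r -> g1 x = - k / beta + (g1 0 + k / beta) * exp (- beta * x).
Proof.
  intros Hb x Hx.
  rewrite (deriv_on_linear_ode 0 r g1 g2 beta (- k / beta) (Rlt_le _ _ Hr) Hg1) by
    (try exact Hx; intros y Hy; rewrite Hode by exact Hy; field; exact Hb).
  rewrite Rminus_0_r. f_equal. f_equal. field. exact Hb.
Qed.

Lemma gamma_exp_profile : beta <> 0 ->
  forall x, 0 <= x <= r -> gamma x = gamma 0 + exp_profile beta k (g1 0 + k / beta) x.
Proof.
  intros Hb x Hx.
  assert (D : forall y, is_derive (exp_profile beta k (g1 0 + k / beta)) y
                 (- k / beta + (g1 0 + k / beta) * exp (- beta * y)))
    by (intros; unfold exp_profile; auto_derive; auto; field; exact Hb).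
  rewrite (deriv_on_antiderivative 0 r gamma g1 _ _ (Rlt_le _ _ Hr) Hgamma D) by
    (try exact Hx; intros y Hy; apply g1_exp; auto; lra).
  unfold exp_profile. rewrite Rmult_0_r, exp_0. ring.
Qed.

Lemma exp_endpoint : beta <> 0 -> g1 r = 0 ->
  g1 0 + k / beta = k / beta * exp (beta * r) /\ 0 <= k.
Proof.
  intros Hb Hg1r.
  assert (HE : exp (beta * r) <> 0) by apply Rgt_not_eq, exp_pos.
  assert (HA : g1 0 + k / beta = k / beta * exp (beta * r)).
  { rewrite g1_exp in Hg1r by (auto; lra).
    replace (exp (- beta * r)) with (/ exp (beta * r)) in Hg1r
      by (rewrite <- exp_Ropp; f_equal; ring).
    replace (g1 0 + k / beta) with ((g1 0 + k / beta) * / exp (beta * r) * exp (beta * r))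
      by (field; split; assumption).
    f_equal. lra. }
  split; [exact HA |].
  set (t := beta * (r / 2)).
  assert (Hmid : 0 < k / beta * (exp t - 1)).
  { pose proof (Hpos (r / 2) ltac:(lra)) as Hmid. rewrite g1_exp, HA in Hmid by (auto; lra).
    replace (beta * r) with (t + - (- beta * (r / 2))) in Hmid by (unfold t; field).
    rewrite exp_plus, exp_Ropp in Hmid.
    replace (- k / beta + k / beta * (exp t * / exp (- beta * (r / 2))) * exp (- beta * (r / 2)))
      with (k / beta * (exp t - 1)) in Hmid
      by (field; split; [apply Rgt_not_eq, exp_pos | exact Hb]).
    exact Hmid. }
  assert (Ht : 0 < t * (exp t - 1)) by (apply mul_exp_sub1_pos; unfold t; nra).
  assert (Hkt : k * (t * (exp t - 1)) = k / beta * (exp t - 1) * (beta * beta * (r / 2)))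
    by (unfold t; field; exact Hb).
  pose proof (Rsqr_pos_lt beta Hb) as Hbb. unfold Rsqr in Hbb.
  assert (0 < k / beta * (exp t - 1) * (beta * beta * (r / 2))) by (apply Rmult_lt_0_compat; nra).
  nra.
Qed.

End Solution.

Theorem lemma3p2 (beta k r eps : R) (gamma g1 g2 : R -> R) :
  0 < r ->
  C2_on 0 r gamma g1 g2 ->
  (forall x, 0 < x < r -> - g2 x - beta * Rabs (g1 x) = k) ->
  (forall x, 0 < x < r -> 0 < g1 x) ->
  0 < eps ->
  (2 * eps <= r \/ g1 r = 0) ->
  let r1 := Rmin eps r in
  let r2 := Rmin (2 * eps) r in
  a_plus eps beta * (gamma r1 - gamma 0)
    - a_minus eps beta * (gamma r2 - gamma r1) <= eps * k.
Proof.
  intros Hr [Hgamma [Hg1 _]] Habs Hpos He Hend r1 r2.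
  assert (Hode : forall x, 0 < x < r -> g2 x = - k - beta * g1 x).
  { intros x Hx. rewrite <- (Habs x Hx), Rabs_pos_eq by exact (Rlt_le _ _ (Hpos x Hx)). ring. }
  assert (Hg1r : r < 2 * eps -> g1 r = 0) by (destruct Hend; [lra | auto]).
  destruct (Req_EM_T beta 0) as [Hb | Hb].
  - subst beta.
    apply (bound_of_profile 0 k r eps gamma (quad_profile k (g1 0))); try lra.
    + eapply gamma_quad_profile; eauto.
    + apply quad_profile_balance. exact He.
    + intros Hshort. destruct (quad_endpoint 0 k r g1 g2) as [-> Hk]; auto.
      split; [apply quad_profile_drop | intros; apply quad_profile_short]; lra.
  - apply (bound_of_profile beta k r eps gamma (exp_profile beta k (g1 0 + k / beta))); try lra.
    + eapply gamma_exp_profile; eauto.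
    + apply exp_profile_balance; assumption.
    + intros Hshort. destruct (exp_endpoint beta k r g1 g2) as [-> Hk]; auto.
      split; [apply exp_profile_drop | intros; apply exp_profile_short]; auto; lra.
Qed.
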